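(* Let $\pi\in H(\mathbb{Z})$ with $\pi\pi^*=p$ a prime, $p\ge 13$, and let $C$ be an $(n,k)$ linear code over $H(\mathbb{Z})_\pi$. If $C$ corrects all errors of Lipschitz weight $2$ or less, then $(p^2)^{n-k}\ge 32n^2+8n+1$.
   Context: $H(\mathbb{Z})=\{a_0+a_1e_1+a_2e_2+a_3e_3:a_i\in\mathbb{Z}\}$ (Lipschitz integers) with quaternion multiplication $e_1^2=e_2^2=e_3^2=-1$, $e_1e_2=-e_2e_1=e_3$, $e_3e_1=-e_1e_3=e_2$, $e_2e_3=-e_3e_2=e_1$; $q^*=a_0-a_1e_1-a_2e_2-a_3e_3$, $N(q)=qq^*$. Right congruence: $q_1\equiv_r q_2 \pmod\pi$ iff $q_1-q_2=\delta\pi$ for some $\delta\in H(\mathbb{Z})$; $H(\mathbb{Z})_\pi=H(\mathbb{Z})/H(\mathbb{Z})\pi$, which has $p^2$ elements. The Lipschitz weight of a class $\gamma$ is $\min\{|a_0|+|a_1|+|a_2|+|a_3| : a_0+a_1e_1+a_2e_2+a_3e_3\in\gamma\}$; the weight of a vector is the sum of the weights of its components. An $(n,k)$ linear code over $H(\mathbb{Z})_\pi$ is an additive subgroup $C\subseteq H(\mathbb{Z})_\pi^n$ such that $H(\mathbb{Z})_\pi^n/C$ has exactly $(p^2)^{n-k}$ cosets. $C$ corrects all errors of weight $t$ or less if all vectors of Lipschitz weight at most $t$ lie in pairwise distinct cosets of $C$. *)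

From Stdlib Require Import ZArith List Znumtheory.
Open Scope Z_scope.

(** Lipschitz integers a0 + a1 e1 + a2 e2 + a3 e3 *)
Record quat := Quat { q0 : Z; q1 : Z; q2 : Z; q3 : Z }.

Definition qconst (a : Z) : quat := Quat a 0 0 0.
Definition qzero : quat := qconst 0.

Definition qadd (x y : quat) : quat :=
  Quat (q0 x + q0 y) (q1 x + q1 y) (q2 x + q2 y) (q3 x + q3 y).
Definition qopp (x : quat) : quat := Quat (- q0 x) (- q1 x) (- q2 x) (- q3 x).
Definition qsub (x y : quat) : quat := qadd x (qopp y).

(** Hamilton product: e1^2=e2^2=e3^2=-1, e1e2=e3, e2e3=e1, e3e1=e2 *)
Definition qmul (a b : quat) : quat :=
  Quat (q0 a * q0 b - q1 a * q1 b - q2 a * q2 b - q3 a * q3 b)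
       (q0 a * q1 b + q1 a * q0 b + q2 a * q3 b - q3 a * q2 b)
       (q0 a * q2 b - q1 a * q3 b + q2 a * q0 b + q3 a * q1 b)
       (q0 a * q3 b + q1 a * q2 b - q2 a * q1 b + q3 a * q0 b).

Definition qconj (x : quat) : quat := Quat (q0 x) (- q1 x) (- q2 x) (- q3 x).

Definition rcongr (pi x y : quat) : Prop :=
  exists delta : quat, qsub x y = qmul delta pi.

Definition l1 (x : quat) : Z := Z.abs (q0 x) + Z.abs (q1 x) + Z.abs (q2 x) + Z.abs (q3 x).

(** [w] is the Lipschitz weight of the class of [x] in H(Z)_pi:
    the minimum of l1 over all representatives of the class. *)
Definition is_class_weight (pi x : quat) (w : Z) : Prop :=
  (exists y, rcongr pi y x /\ l1 y = w) /\
  (forall y, rcongr pi y x -> w <= l1 y).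

(** Vectors of length n: functions nat -> quat, only indices i < n matter.
    An element of H(Z)_pi^n is represented by a vector of lifts. *)
Definition vec := nat -> quat.
Definition vzero : vec := fun _ => qzero.
Definition vadd (u v : vec) : vec := fun i => qadd (u i) (v i).
Definition vopp (u : vec) : vec := fun i => qopp (u i).
Definition vsub (u v : vec) : vec := fun i => qsub (u i) (v i).

(** Equality in H(Z)_pi^n of the classes of u and v. *)
Definition vcongr (pi : quat) (n : nat) (u v : vec) : Prop :=
  forall i, (i < n)%nat -> rcongr pi (u i) (v i).

Fixpoint sum_upto (n : nat) (f : nat -> Z) : Z :=
  match n with O => 0 | S m => sum_upto m f + f m end.

Definition is_vec_weight (pi : quat) (n : nat) (u : vec) (W : Z) : Prop :=
  exists w : nat -> Z,
    (forall i, (i < n)%nat -> is_class_weight pi (u i) (w i)) /\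
    W = sum_upto n w.

(** A subset C of H(Z)_pi^n, given by the predicate on lifts (it must be
    compatible with the congruence), which is an additive subgroup. *)
Definition additive_subgroup (pi : quat) (n : nat) (C : vec -> Prop) : Prop :=
  (forall u v, vcongr pi n u v -> C u -> C v) /\
  C vzero /\
  (forall u v, C u -> C v -> C (vadd u v)) /\
  (forall u, C u -> C (vopp u)).

Definition num_cosets (pi : quat) (n : nat) (C : vec -> Prop) (m : Z) : Prop :=
  exists reps : list vec,
    Z.of_nat (length reps) = m /\
    (forall v, exists r, In r reps /\ C (vsub v r)) /\
    (forall i j, (i < length reps)%nat -> (j < length reps)%nat ->
       C (vsub (nth i reps vzero) (nth j reps vzero)) -> i = j).

Definition linear_code (pi : quat) (p : Z) (n k : nat) (C : vec -> Prop) : Prop :=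
  additive_subgroup pi n C /\ num_cosets pi n C ((p ^ 2) ^ Z.of_nat (n - k)).

Definition corrects (pi : quat) (n : nat) (C : vec -> Prop) (t : Z) : Prop :=
  forall u v Wu Wv,
    is_vec_weight pi n u Wu -> is_vec_weight pi n v Wv ->
    Wu <= t -> Wv <= t ->
    C (vsub u v) -> vcongr pi n u v.

(* A nonzero right multiple of pi has norm at least N(pi) = p,
   because the quaternion norm is multiplicative.  A quaternion of Lipschitz
   size (l1) at most 4 and norm >= 13 must be +-4 e_i, of norm 16, which is
   not a multiple of a prime p >= 13.  Hence
   - two quaternions of l1 at most 2 that are congruent mod pi are equal, and
   - a quaternion of l1 at most 2 is a minimal representative of its class,
     so its class weight is its l1 (any other representative differs from it
     by an element of norm >= p > 9, hence of l1 >= 4).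
   We then enumerate explicitly the lists of n quaternions of total l1 equal
   to 0, 1, 2: there are 1, 8n and 32n^2 of them.  Read as vectors, they have
   Lipschitz weight <= 2 and are pairwise incongruent, so a code correcting
   two errors puts them into pairwise distinct cosets; a pigeonhole argument
   on the list of coset representatives gives (p^2)^(n-k) >= 32n^2 + 8n + 1. *)
From Stdlib Require Import ZArith Znumtheory List Lia.
Import ListNotations.
Open Scope Z_scope.

Definition nrm (x : quat) : Z :=
  q0 x * q0 x + q1 x * q1 x + q2 x * q2 x + q3 x * q3 x.

Lemma nrm_mul (a b : quat) : nrm (qmul a b) = nrm a * nrm b.
Proof. destruct a, b; unfold nrm, qmul; simpl; ring. Qed.

Lemma nrm_nonneg (x : quat) : 0 <= nrm x.
Proof. unfold nrm; nia. Qed.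

Lemma nrm_eq0 (x : quat) : nrm x = 0 -> x = qzero.
Proof.
  destruct x as [a b c d]; unfold nrm, qzero, qconst; simpl; intro H.
  assert (a = 0) by nia; assert (b = 0) by nia; assert (c = 0) by nia;
    assert (d = 0) by nia.
  now subst.
Qed.

Lemma nrm_of_conj_product (pi : quat) (p : Z) :
  qmul pi (qconj pi) = qconst p -> nrm pi = p.
Proof.
  intro H; apply (f_equal q0) in H.
  destruct pi; unfold nrm, qmul, qconj in *; simpl in *; lia.
Qed.

Lemma nrm_le_l1_sq (x : quat) : nrm x <= l1 x * l1 x.
Proof.
  destruct x as [a b c d]; unfold nrm, l1; simpl.
  rewrite <- (Z.abs_square a), <- (Z.abs_square b), <- (Z.abs_square c),
    <- (Z.abs_square d).
  pose proof (Z.abs_nonneg a); pose proof (Z.abs_nonneg b);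
    pose proof (Z.abs_nonneg c); pose proof (Z.abs_nonneg d); nia.
Qed.

(* Among quaternions of l1 at most 4, the only norm >= 13 is 16 (from +-4 e_i). *)
Lemma nrm_gap_small_l1 (x : quat) : l1 x <= 4 -> 13 <= nrm x -> nrm x = 16.
Proof.
  destruct x as [a b c d]; unfold nrm, l1; simpl.
  rewrite <- (Z.abs_square a), <- (Z.abs_square b), <- (Z.abs_square c),
    <- (Z.abs_square d).
  pose proof (Z.abs_nonneg a); pose proof (Z.abs_nonneg b);
    pose proof (Z.abs_nonneg c); pose proof (Z.abs_nonneg d).
  set (A := Z.abs a); set (B := Z.abs b); set (C := Z.abs c); set (D := Z.abs d).
  intros Hsum Hbig.
  assert (A = 4 \/ B = 4 \/ C = 4 \/ D = 4 \/ (A <= 3 /\ B <= 3 /\ C <= 3 /\ D <= 3))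
    as [E|[E|[E|[E|E]]]] by lia; nia.
Qed.

Lemma l1_nonneg (x : quat) : 0 <= l1 x.
Proof. unfold l1; lia. Qed.

Lemma l1_sub (x y : quat) : l1 (qsub x y) <= l1 x + l1 y.
Proof. destruct x, y; unfold l1, qsub, qadd, qopp; simpl; lia. Qed.

Lemma rcongr_refl (pi x : quat) : rcongr pi x x.
Proof.
  exists qzero.
  destruct x, pi; unfold qsub, qadd, qopp, qmul, qzero, qconst; simpl; f_equal; ring.
Qed.

Lemma qsub_eq0 (x y : quat) : qsub x y = qzero -> x = y.
Proof.
  destruct x, y; unfold qsub, qadd, qopp, qzero, qconst; simpl.
  intro H; injection H; intros; f_equal; lia.
Qed.

(* Distinct congruent quaternions differ by a nonzero multiple of pi,
   whose norm is a positive multiple of N(pi). *)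
Lemma rcongr_distinct_nrm (pi x y : quat) :
  rcongr pi x y -> x <> y -> exists m, 1 <= m /\ nrm (qsub x y) = nrm pi * m.
Proof.
  intros [d Hd] Hne; exists (nrm d); split; [|now rewrite Hd, nrm_mul, Z.mul_comm].
  pose proof (nrm_nonneg d).
  destruct (Z.eq_dec (nrm d) 0) as [E|E]; [|lia].
  exfalso; apply Hne, qsub_eq0.
  rewrite Hd, (nrm_eq0 _ E); destruct pi; unfold qmul, qzero, qconst; simpl.
  f_equal; ring.
Qed.

Lemma rcongr_distinct_nrm_ge (pi x y : quat) :
  rcongr pi x y -> x <> y -> nrm pi <= nrm (qsub x y).
Proof.
  intros Hc Hne; destruct (rcongr_distinct_nrm _ _ _ Hc Hne) as [m [Hm ->]].
  pose proof (nrm_nonneg pi); nia.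
Qed.

Lemma quat_eq_dec (x y : quat) : {x = y} + {x <> y}.
Proof. decide equality; apply Z.eq_dec. Qed.

Lemma not_prime_16 : ~ prime 16.
Proof. intros H16; apply prime_alt in H16; apply (proj2 H16 2); [lia | now exists 8]. Qed.

(* Quaternions of l1 at most 2 lie in distinct classes modulo a prime pi
   of norm >= 13: their difference would have l1 <= 4 and norm >= 13, hence
   norm 16, a multiple of N(pi) -- forcing N(pi) = 16. *)
Lemma small_rcongr_eq (pi x y : quat) :
  prime (nrm pi) -> 13 <= nrm pi ->
  rcongr pi x y -> l1 x <= 2 -> l1 y <= 2 -> x = y.
Proof.
  intros Hp H13 Hc Hx Hy.
  destruct (quat_eq_dec x y) as [E|Hne]; [exact E | exfalso].
  destruct (rcongr_distinct_nrm _ _ _ Hc Hne) as [m [Hm Hnrm]].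
  assert (Hl1 : l1 (qsub x y) <= 4) by (pose proof (l1_sub x y); lia).
  pose proof (nrm_gap_small_l1 _ Hl1 ltac:(nia)) as H16.
  assert (nrm pi = 16) as Hpi16 by nia.
  rewrite Hpi16 in Hp; exact (not_prime_16 Hp).
Qed.

(* A quaternion of l1 at most 2 is a minimal representative of its class:
   any other representative differs from it by an element of norm >= 10,
   hence of l1 >= 4. *)
Lemma small_class_weight (pi x : quat) :
  10 <= nrm pi -> l1 x <= 2 -> is_class_weight pi x (l1 x).
Proof.
  intros H10 Hx; split; [exists x; split; [apply rcongr_refl | reflexivity] |].
  intros y Hy; destruct (quat_eq_dec y x) as [->|Hne]; [lia|].
  pose proof (rcongr_distinct_nrm_ge _ _ _ Hy Hne) as Hbig.
  pose proof (nrm_le_l1_sq (qsub y x)); pose proof (l1_sub y x).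
  pose proof (l1_nonneg (qsub y x)).
  assert (4 <= l1 (qsub y x)) by nia; lia.
Qed.

Definition sphere (w : nat) : list quat :=
  match w with
  | O => [qzero]
  | 1%nat => [Quat 1 0 0 0; Quat (-1) 0 0 0; Quat 0 1 0 0; Quat 0 (-1) 0 0;
              Quat 0 0 1 0; Quat 0 0 (-1) 0; Quat 0 0 0 1; Quat 0 0 0 (-1)]
  | 2%nat => [Quat 2 0 0 0; Quat (-2) 0 0 0; Quat 0 2 0 0; Quat 0 (-2) 0 0;
              Quat 0 0 2 0; Quat 0 0 (-2) 0; Quat 0 0 0 2; Quat 0 0 0 (-2);
              Quat 1 1 0 0; Quat 1 (-1) 0 0; Quat (-1) 1 0 0; Quat (-1) (-1) 0 0;
              Quat 1 0 1 0; Quat 1 0 (-1) 0; Quat (-1) 0 1 0; Quat (-1) 0 (-1) 0;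
              Quat 1 0 0 1; Quat 1 0 0 (-1); Quat (-1) 0 0 1; Quat (-1) 0 0 (-1);
              Quat 0 1 1 0; Quat 0 1 (-1) 0; Quat 0 (-1) 1 0; Quat 0 (-1) (-1) 0;
              Quat 0 1 0 1; Quat 0 1 0 (-1); Quat 0 (-1) 0 1; Quat 0 (-1) 0 (-1);
              Quat 0 0 1 1; Quat 0 0 1 (-1); Quat 0 0 (-1) 1; Quat 0 0 (-1) (-1)]
  | _ => []
  end.

Lemma sphere_l1 (w : nat) (x : quat) : In x (sphere w) -> l1 x = Z.of_nat w.
Proof.
  destruct w as [|[|[|w]]]; simpl; intro H;
    repeat (destruct H as [H|H]; [subst; reflexivity|]); contradiction.
Qed.

Lemma sphere_nodup (w : nat) : NoDup (sphere w).
Proof.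
  destruct w as [|[|[|w]]]; simpl; [| | | constructor];
    repeat (constructor; [simpl; intro H;
              repeat (destruct H as [H|H]; [discriminate|]); exact H|]);
    constructor.
Qed.

Fixpoint l1_total (l : list quat) : Z :=
  match l with [] => 0 | x :: r => l1 x + l1_total r end.

Lemma l1_total_nonneg (l : list quat) : 0 <= l1_total l.
Proof. induction l; simpl; [lia | pose proof (l1_nonneg a); lia]. Qed.

Lemma l1_le_total (x : quat) (l : list quat) : In x l -> l1 x <= l1_total l.
Proof.
  induction l as [|a l IH]; simpl; [contradiction|]; intros [->|H].
  - pose proof (l1_total_nonneg l); lia.
  - pose proof (l1_nonneg a); specialize (IH H); lia.
Qed.

Fixpoint lists (n t : nat) {struct n} : list (list quat) :=
  match n with
  | O => match t with O => [[]] | _ => [] end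
  | S m => flat_map (fun w => flat_map (fun x => map (cons x) (lists m (t - w)))
                                       (sphere w))
                    (seq 0 (S t))
  end.

Lemma lists_S (m t : nat) :
  lists (S m) t =
  flat_map (fun w => flat_map (fun x => map (cons x) (lists m (t - w))) (sphere w))
           (seq 0 (S t)).
Proof. reflexivity. Qed.

Lemma lists_spec (n t : nat) (l : list quat) :
  In l (lists n t) -> length l = n /\ l1_total l = Z.of_nat t.
Proof.
  revert t l; induction n as [|m IH]; intros t l H; [simpl in H | rewrite lists_S in H].
  - destruct t; simpl in H; [destruct H as [<-|[]]; simpl; lia | contradiction].
  - apply in_flat_map in H as [w [Hw H]].
    apply in_flat_map in H as [x [Hx H]].
    apply in_map_iff in H as [l' [<- H]].
    apply in_seq in Hw; apply IH in H; apply sphere_l1 in Hx.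
    simpl; lia.
Qed.

Lemma NoDup_flat_map {A B : Type} (f : A -> list B) (l : list A) :
  NoDup l -> (forall x, In x l -> NoDup (f x)) ->
  (forall x y z, In x l -> In y l -> In z (f x) -> In z (f y) -> x = y) ->
  NoDup (flat_map f l).
Proof.
  induction l as [|a l IH]; intros Hnd Hf Hd; simpl; [constructor|].
  inversion Hnd as [|? ? Ha Hl]; subst.
  apply NoDup_app.
  - apply Hf; simpl; auto.
  - apply IH; auto; [intros; apply Hf | intros; eapply Hd]; simpl; eauto.
  - intros z Hz Hz'; apply in_flat_map in Hz' as [y [Hy Hzy]].
    assert (a = y) as <- by (eapply Hd; simpl; eauto); contradiction.
Qed.

Lemma lists_nodup (n t : nat) : NoDup (lists n t).
Proof.
  revert t; induction n as [|m IH]; intro t; [simpl | rewrite lists_S].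
  - destruct t; repeat constructor; simpl; auto.
  - apply NoDup_flat_map; [apply seq_NoDup| |].
    + intros w _; apply NoDup_flat_map; [apply sphere_nodup| |].
      * intros x _; apply NoDup_map_NoDup_ForallPairs; [|apply IH].
        intros a b _ _ E; injection E; auto.
      * intros x y z _ _ Hx Hy; apply in_map_iff in Hx as [a [<- _]].
        apply in_map_iff in Hy as [b [E _]]; injection E; auto.
    + intros w w' z _ _ Hz Hz'.
      apply in_flat_map in Hz as [x [Hx Hz]], Hz' as [x' [Hx' Hz']].
      apply in_map_iff in Hz as [a [<- _]], Hz' as [b [E _]].
      injection E as ->; apply sphere_l1 in Hx, Hx'; lia.
Qed.

Lemma length_flat_map_cons (A : list quat) (B : list (list quat)) :
  length (flat_map (fun x => map (cons x) B) A) = (length A * length B)%nat.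
Proof. induction A; simpl; auto; rewrite length_app, length_map, IHA; lia. Qed.

Lemma lists_length0 (n : nat) : length (lists n 0) = 1%nat.
Proof.
  induction n; [reflexivity|]; rewrite lists_S; cbn [seq flat_map Nat.sub].
  rewrite !length_app, !length_flat_map_cons, IHn; reflexivity.
Qed.

Lemma lists_length1 (n : nat) : length (lists n 1) = (8 * n)%nat.
Proof.
  induction n; [reflexivity|]; rewrite lists_S; cbn [seq flat_map Nat.sub].
  rewrite !length_app, !length_flat_map_cons, lists_length0, IHn; simpl; lia.
Qed.

Lemma lists_length2 (n : nat) : length (lists n 2) = (32 * n * n)%nat.
Proof.
  induction n; [reflexivity|]; rewrite lists_S; cbn [seq flat_map Nat.sub].
  rewrite !length_app, !length_flat_map_cons, lists_length0, lists_length1, IHn.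
  simpl; lia.
Qed.

Definition small_lists (n : nat) : list (list quat) := lists n 0 ++ lists n 1 ++ lists n 2.

Lemma small_lists_spec (n : nat) (l : list quat) :
  In l (small_lists n) -> length l = n /\ l1_total l <= 2.
Proof.
  unfold small_lists; intro H; apply in_app_or in H as [H|H];
    [|apply in_app_or in H as [H|H]]; apply lists_spec in H; simpl in H; lia.
Qed.

Lemma small_lists_nodup (n : nat) : NoDup (small_lists n).
Proof.
  unfold small_lists; apply NoDup_app; [apply lists_nodup| |].
  - apply NoDup_app; [apply lists_nodup | apply lists_nodup|].
    intros a H1 H2; apply lists_spec in H1, H2; simpl in *; lia.
  - intros a H1 H2; apply lists_spec in H1; apply in_app_or in H2 as [H2|H2];
      apply lists_spec in H2; simpl in *; lia.
Qed.

Lemma small_lists_length (n : nat) :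
  length (small_lists n) = (1 + 8 * n + 32 * n * n)%nat.
Proof.
  unfold small_lists; rewrite !length_app, lists_length0, lists_length1, lists_length2.
  lia.
Qed.

Definition vec_of (l : list quat) : vec := fun i => nth i l qzero.

Lemma sum_upto_shift (m : nat) (f : nat -> Z) :
  sum_upto (S m) f = f 0%nat + sum_upto m (fun i => f (S i)).
Proof. induction m; simpl in *; [lia | rewrite IHm; lia]. Qed.

Lemma sum_upto_nth_l1 (l : list quat) :
  sum_upto (length l) (fun i => l1 (nth i l qzero)) = l1_total l.
Proof.
  induction l as [|a l IH]; [reflexivity|].
  cbn [length]; rewrite sum_upto_shift; cbn [nth]; now rewrite IH.
Qed.

Lemma small_vec_weight (pi : quat) (n : nat) (l : list quat) :
  10 <= nrm pi -> length l = n -> l1_total l <= 2 ->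
  is_vec_weight pi n (vec_of l) (l1_total l).
Proof.
  intros H10 Hlen Htot; exists (fun i => l1 (nth i l qzero)); split.
  - intros i Hi; apply small_class_weight; [exact H10|].
    pose proof (l1_le_total _ _ (nth_In l qzero (ltac:(lia) : (i < length l)%nat))).
    lia.
  - now rewrite <- Hlen, sum_upto_nth_l1.
Qed.

Lemma small_vec_congr_eq (pi : quat) (n : nat) (l l' : list quat) :
  prime (nrm pi) -> 13 <= nrm pi ->
  length l = n -> length l' = n -> l1_total l <= 2 -> l1_total l' <= 2 ->
  vcongr pi n (vec_of l) (vec_of l') -> l = l'.
Proof.
  intros Hp H13 Hl Hl' Ht Ht' Hc.
  apply nth_ext with (d := qzero) (d' := qzero); [lia|]; intros j Hj.
  apply (small_rcongr_eq pi); [exact Hp | exact H13 | apply Hc; lia | |].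
  - pose proof (l1_le_total _ _ (nth_In l qzero Hj)); lia.
  - pose proof (l1_le_total _ _ (nth_In l' qzero (ltac:(lia) : (j < length l')%nat))).
    lia.
Qed.

Lemma same_coset_diff (pi : quat) (n : nat) (C : vec -> Prop) (u v r : vec) :
  additive_subgroup pi n C -> C (vsub u r) -> C (vsub v r) -> C (vsub u v).
Proof.
  intros [Hcomp [_ [Hadd Hopp]]] Hu Hv.
  apply (Hcomp (vadd (vsub u r) (vopp (vsub v r)))); [|now apply Hadd, Hopp].
  intros j _; exists qzero.
  unfold vadd, vopp, vsub, qsub, qadd, qopp, qmul, qzero, qconst; simpl; f_equal; ring.
Qed.

Lemma pigeonhole {T : Type} (R : T -> nat -> Prop) (m : nat) (L : list T) :
  NoDup L ->
  (forall c, In c L -> exists i, (i < m)%nat /\ R c i) ->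
  (forall c c' i, In c L -> In c' L -> R c i -> R c' i -> c = c') ->
  (length L <= m)%nat.
Proof.
  intros Hnd Hex Hinj.
  assert (Hidx : exists li, length li = length L /\ NoDup li /\
            forall i, In i li -> (i < m)%nat /\ exists c, In c L /\ R c i).
  { induction L as [|c L IH]; [exists []; split; [reflexivity | split; [constructor | intros _ []]] |].
    inversion Hnd as [|? ? HcL HndL]; subst.
    destruct IH as [li [Hlen [Hndi Hli]]];
      [exact HndL | intros; apply Hex; simpl; auto | intros; eapply Hinj; simpl; eauto|].
    destruct (Hex c (or_introl eq_refl)) as [i [Hi Ri]].
    exists (i :: li); split; [simpl; auto | split; [constructor; [|exact Hndi] |]].
    - intro Hin; destruct (Hli i Hin) as [_ [c' [Hc' Rc']]].
      assert (c = c') as <- by (eapply Hinj; simpl; eauto); contradiction.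
    - intros j [<-|Hj]; [split; [exact Hi | exists c; simpl; auto]|].
      destruct (Hli j Hj) as [Hj1 [c' [Hc' Rc']]]; split; [exact Hj1 | exists c'; simpl; auto]. }
  destruct Hidx as [li [Hlen [Hndi Hli]]].
  rewrite <- Hlen, <- (length_seq m 0); apply (NoDup_incl_length Hndi).
  intros i Hi; apply in_seq; destruct (Hli i Hi); lia.
Qed.

Lemma cosets_ge_small_vectors (pi : quat) (n : nat) (C : vec -> Prop) (m : Z) :
  prime (nrm pi) -> 13 <= nrm pi ->
  additive_subgroup pi n C -> num_cosets pi n C m -> corrects pi n C 2 ->
  Z.of_nat (length (small_lists n)) <= m.
Proof.
  intros Hp H13 Hsub [reps [<- [Hcov _]]] Hcor; apply Nat2Z.inj_le.
  apply pigeonhole with (R := fun l i => C (vsub (vec_of l) (nth i reps vzero))).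
  - apply small_lists_nodup.
  - intros l _; destruct (Hcov (vec_of l)) as [r [Hr Cr]].
    destruct (In_nth reps r vzero Hr) as [i [Hi <-]]; now exists i.
  - intros l l' i Hl Hl' Ri Ri'.
    destruct (small_lists_spec _ _ Hl) as [Ll Tl], (small_lists_spec _ _ Hl') as [Ll' Tl'].
    apply (small_vec_congr_eq pi n); auto.
    apply (Hcor _ _ (l1_total l) (l1_total l')); try apply small_vec_weight; try lia.
    exact (same_coset_diff _ _ _ _ _ _ Hsub Ri Ri').
Qed.

Theorem theorem10 (pi : quat) (p : Z) (n k : nat) (C : vec -> Prop) :
  qmul pi (qconj pi) = qconst p ->
  prime p -> 13 <= p ->
  linear_code pi p n k C ->
  corrects pi n C 2 ->
  (p ^ 2) ^ Z.of_nat (n - k) >= 32 * (Z.of_nat n) ^ 2 + 8 * Z.of_nat n + 1.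
Proof.
  intros Hpi Hp H13 [Hsub Hcosets] Hcor.
  pose proof (nrm_of_conj_product _ _ Hpi) as Hnrm; subst p.
  pose proof (cosets_ge_small_vectors _ _ _ _ Hp H13 Hsub Hcosets Hcor) as Hle.
  rewrite small_lists_length in Hle; lia.
Qed.
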